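(* Let $\lambda>2/\sqrt3$ and let $\mathcal M_2$ be a set of $2$ or $3$ pairs $ab$ of points of $\mathbb R^2$ such that all endpoints of all pairs are pairwise distinct, $\|a\|+\|b\|=\lambda\|a-b\|$ for every $ab\in\mathcal M_2$, and $o\in\operatorname{conv}\{\ell_{ab}: ab\in\mathcal M_2\}$, where $o$ is the origin. Let $G$ be the graph whose vertex set $V(G)$ is the set of all endpoints of pairs in $\mathcal M_2$, with blue edges $E_b(G)=\mathcal M_2$ and red edges $E_r(G)=\{xy: x,y\in V(G),\ \|x\|+\|y\|<\lambda\|x-y\|\}$. If there is a vertex $x\in V(G)$ such that $\angle(x,y)<2\pi/3$ for every $y\in V(G)\setminus\{x\}$, then $G$ contains an alternating cycle.
   Context: $\ell_{ab}=\dfrac{\|b\|}{\|a\|+\|b\|}a+\dfrac{\|a\|}{\|a\|+\|b\|}b$. $\angle(x,y)\in[0,\pi]$ denotes the smallest nonnegative angle between nonzero vectors $x,y$ (all vertices of $G$ are nonzero since $\lambda>1$). An alternating cycle is a simple cycle of even length in $G$ whose edges alternate between blue edges and red edges. *)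

From Stdlib Require Import Reals Lra List.
Open Scope R_scope.

Definition pt := (R * R)%type.

Definition dot (x y : pt) : R := fst x * fst y + snd x * snd y.
Definition nrm (x : pt) : R := sqrt (dot x x).
Definition psub (x y : pt) : pt := (fst x - fst y, snd x - snd y).
Definition pscale (c : R) (x : pt) : pt := (c * fst x, c * snd x).
Definition padd (x y : pt) : pt := (fst x + fst y, snd x + snd y).
Definition origin : pt := (0, 0).

Definition ell (a b : pt) : pt :=
  padd (pscale (nrm b / (nrm a + nrm b)) a) (pscale (nrm a / (nrm a + nrm b)) b).

Definition angle (x y : pt) : R := acos (dot x y / (nrm x * nrm y)).

Definition endpoints (M : list (pt * pt)) : list pt :=
  flat_map (fun p => fst p :: snd p :: nil) M.

Definition in_conv_hull (o : pt) (ps : list pt) : Prop :=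
  exists w : list R, length w = length ps /\ Forall (fun t => 0 <= t) w /\
    fold_right Rplus 0 w = 1 /\
    fold_right padd origin (map (fun '(t, p) => pscale t p) (combine w ps)) = o.

Definition blue_edge (M : list (pt * pt)) (x y : pt) : Prop :=
  exists a b, In (a, b) M /\ ((x = a /\ y = b) \/ (x = b /\ y = a)).

Definition red_edge (lam : R) (M : list (pt * pt)) (x y : pt) : Prop :=
  In x (endpoints M) /\ In y (endpoints M) /\ nrm x + nrm y < lam * nrm (psub x y).

Definition alternating_cycle (lam : R) (M : list (pt * pt)) (c : list pt) : Prop :=
  NoDup c /\ (forall v, In v c -> In v (endpoints M)) /\
  exists k : nat, (2 <= k)%nat /\ length c = (2 * k)%nat /\
  forall i : nat, (i < 2 * k)%nat ->
    let u := nth i c origin in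
    let v := nth (S i mod (2 * k)) c origin in
    if Nat.even i then blue_edge M u v else red_edge lam M u v.

From Stdlib Require Import Reals Lra Lia List Classical.
Open Scope R_scope.

(* Measure signed angles from the direction of [x], so that every vertex lies at angle
   less than [2 pi/3] from it.  Since [lam > 2/sqrt 3], two vertices at angular distance
   at least [2 pi/3] span a red edge; in particular the endpoints of a blue pair are less
   than [2 pi/3] apart.  Then [ell a b] is a positive multiple of the unit vector at the
   mean angle of [a] and [b].  If all these mean angles fit in an open interval of length
   [pi], some direction makes an acute angle with every [ell a b], and the origin cannot be
   in their convex hull.  So two blue pairs [ab], [a'b'] have mean angles at least [pi]
   apart, which puts [a'] at angular distance at least [2 pi/3] from [a] and [b'] from [b]:
   [a b b' a'] is an alternating cycle. *)

Lemma dot_self_nonneg v : 0 <= dot v v.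
Proof. destruct v as [a b]; unfold dot; simpl; nra. Qed.

Lemma dot_padd p q e : dot (padd p q) e = dot p e + dot q e.
Proof. destruct p, q, e; unfold dot, padd; simpl; ring. Qed.

Lemma dot_pscale t p e : dot (pscale t p) e = t * dot p e.
Proof. destruct p, e; unfold dot, pscale; simpl; ring. Qed.

Lemma dot_origin e : dot origin e = 0.
Proof. destruct e; unfold dot, origin; simpl; ring. Qed.

Lemma nrm_nonneg v : 0 <= nrm v.
Proof. apply sqrt_pos. Qed.

Lemma nrm_mul_self v : nrm v * nrm v = dot v v.
Proof. apply sqrt_sqrt, dot_self_nonneg. Qed.

Lemma nrm_eq0 v : nrm v = 0 -> v = origin.
Proof.
  intro H. pose proof (nrm_mul_self v) as E. rewrite H in E.
  destruct v as [a b]; unfold dot in E; simpl in E.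
  assert (a = 0) by nra; assert (b = 0) by nra; subst; reflexivity.
Qed.

Lemma nrm_gt0 v : v <> origin -> 0 < nrm v.
Proof.
  intro Hv. destruct (Rle_lt_or_eq_dec 0 (nrm v) (nrm_nonneg v)) as [|E]; auto.
  exfalso; apply Hv, nrm_eq0; auto.
Qed.

Lemma nrm_psub_sym a b : nrm (psub a b) = nrm (psub b a).
Proof. unfold nrm; f_equal; destruct a, b; unfold dot, psub; simpl; ring. Qed.

Lemma nrm_psub_origin a : nrm (psub a origin) = nrm a.
Proof. unfold nrm; f_equal; destruct a; unfold dot, psub, origin; simpl; ring. Qed.

Lemma nrm_origin : nrm origin = 0.
Proof. unfold nrm; rewrite dot_origin; apply sqrt_0. Qed.

Lemma nrm_psub_mul_self v w :
  nrm (psub v w) * nrm (psub v w) = nrm v * nrm v + nrm w * nrm w - 2 * dot v w.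
Proof. rewrite !nrm_mul_self; destruct v, w; unfold dot, psub; simpl; ring. Qed.

Definition cross (x v : pt) : R := fst x * snd v - snd x * fst v.

Definition arg_rel (x v : pt) : R :=
  if Rle_dec 0 (cross x v) then angle x v else - angle x v.

Definition rot (x : pt) (c : R) : pt :=
  (cos c * fst x - sin c * snd x, cos c * snd x + sin c * fst x).

Lemma lagrange_identity x v :
  dot x v * dot x v + cross x v * cross x v = (nrm x * nrm x) * (nrm v * nrm v).
Proof. rewrite !nrm_mul_self; destruct x, v; unfold dot, cross; simpl; ring. Qed.

Section ArgRel.

Variables x v : pt.
Hypotheses (Hx : x <> origin) (Hv : v <> origin).

Let cosine := dot x v / (nrm x * nrm v).
Let sine := cross x v / (nrm x * nrm v).

Lemma cos_sin_rel_sq : cosine * cosine + sine * sine = 1.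
Proof.
  pose proof (nrm_gt0 x Hx); pose proof (nrm_gt0 v Hv).
  unfold cosine, sine.
  transitivity ((dot x v * dot x v + cross x v * cross x v) / ((nrm x * nrm v) * (nrm x * nrm v))).
  - field; lra.
  - rewrite lagrange_identity; field; lra.
Qed.

Lemma cos_rel_bound : -1 <= cosine <= 1.
Proof. pose proof cos_sin_rel_sq; nra. Qed.

Lemma cos_arg_rel : cos (arg_rel x v) = dot x v / (nrm x * nrm v).
Proof.
  unfold arg_rel, angle; destruct Rle_dec; [|rewrite cos_neg];
    apply cos_acos, cos_rel_bound.
Qed.

Lemma sin_arg_rel : sin (arg_rel x v) = cross x v / (nrm x * nrm v).
Proof.
  pose proof (nrm_gt0 x Hx); pose proof (nrm_gt0 v Hv).
  assert (E : 1 - cosine² = sine²) by (pose proof cos_sin_rel_sq; unfold Rsqr; lra).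
  assert (Hs : 0 <= cross x v <-> 0 <= sine).
  { assert (0 < / (nrm x * nrm v)) by (apply Rinv_0_lt_compat; nra).
    unfold sine, Rdiv; split; intro; nra. }
  unfold arg_rel, angle; destruct Rle_dec.
  - rewrite sin_acos by apply cos_rel_bound. fold cosine. rewrite E, sqrt_Rsqr; tauto.
  - rewrite sin_neg, sin_acos by apply cos_rel_bound. fold cosine.
    rewrite E, sqrt_Rsqr_abs, Rabs_left; [fold sine; lra|].
    destruct (Rlt_or_le sine 0); tauto.
Qed.

End ArgRel.

Lemma Rabs_arg_rel x v : Rabs (arg_rel x v) = angle x v.
Proof.
  pose proof (acos_bound (dot x v / (nrm x * nrm v))).
  unfold arg_rel, angle; destruct Rle_dec;
    [rewrite Rabs_right|rewrite Rabs_Ropp, Rabs_right]; lra.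
Qed.

Lemma angle_self x : x <> origin -> angle x x = 0.
Proof.
  intro Hx. pose proof (nrm_gt0 x Hx).
  unfold angle. rewrite <- nrm_mul_self, <- acos_1. f_equal; field; lra.
Qed.

Lemma dot_arg_rel x v w : x <> origin -> v <> origin -> w <> origin ->
  dot v w = nrm v * nrm w * cos (arg_rel x v - arg_rel x w).
Proof.
  intros Hx Hv Hw.
  pose proof (nrm_gt0 x Hx); pose proof (nrm_gt0 v Hv); pose proof (nrm_gt0 w Hw).
  rewrite cos_minus, !cos_arg_rel, !sin_arg_rel by auto.
  assert (E : dot x v * dot x w + cross x v * cross x w = (nrm x * nrm x) * dot v w).
  { rewrite nrm_mul_self; destruct x, v, w; unfold dot, cross; simpl; ring. }
  transitivity ((nrm x * nrm x) * dot v w / (nrm x * nrm x)); [field; lra|].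
  rewrite <- E; field; lra.
Qed.

Lemma dot_rot x v c : x <> origin -> v <> origin ->
  dot v (rot x c) = nrm v * nrm x * cos (arg_rel x v - c).
Proof.
  intros Hx Hv. pose proof (nrm_gt0 x Hx); pose proof (nrm_gt0 v Hv).
  rewrite cos_minus, cos_arg_rel, sin_arg_rel by auto.
  transitivity (dot x v * cos c + cross x v * sin c).
  - destruct x, v; unfold dot, cross, rot; simpl; ring.
  - field; lra.
Qed.

Lemma lam_facts lam : 2 / sqrt 3 < lam -> 0 < lam /\ 4 < 3 * (lam * lam).
Proof.
  intro Hl. assert (H3 : 0 < sqrt 3) by (apply sqrt_lt_R0; lra).
  assert (E3 : sqrt 3 * sqrt 3 = 3) by (apply sqrt_sqrt; lra).
  assert (Hl' : 2 < lam * sqrt 3).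
  { replace 2 with (2 / sqrt 3 * sqrt 3) by (field; lra). apply Rmult_lt_compat_r; auto. }
  split; nra.
Qed.

(* [|v - w|^2 >= 3/4 (|v| + |w|)^2] as soon as the angle between [v] and [w] is at least [2 pi/3]. *)
Lemma nrm_add_lt_of_obtuse lam v w : 2 / sqrt 3 < lam -> v <> origin ->
  dot v w <= - (nrm v * nrm w) / 2 -> nrm v + nrm w < lam * nrm (psub v w).
Proof.
  intros Hl Hv Hd. destruct (lam_facts lam Hl) as [Hl0 Hl2].
  pose proof (nrm_gt0 v Hv); pose proof (nrm_nonneg w); pose proof (nrm_nonneg (psub v w)).
  pose proof (nrm_psub_mul_self v w).
  set (p := nrm v + nrm w); set (s := nrm (psub v w)) in *.
  assert (Hsp : 3 * (p * p) <= 4 * (s * s)).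
  { unfold p; pose proof (Rle_0_sqr (nrm v - nrm w)); unfold Rsqr in *; nra. }
  assert (Hsq : p * p < (lam * s) * (lam * s)).
  { assert (0 < p * p) by (unfold p; nra). nra. }
  assert (0 <= lam * s) by nra. unfold p in *; nra.
Qed.

Lemma cos_Rabs d : cos (Rabs d) = cos d.
Proof. unfold Rabs; destruct Rcase_abs; rewrite ?cos_neg; auto. Qed.

Lemma cos_le_neg_half d : 2 * PI / 3 <= Rabs d <= 4 * PI / 3 -> cos d <= -1/2.
Proof.
  intro H. pose proof PI_RGT_0.
  rewrite <- cos_Rabs. replace (Rabs d) with ((Rabs d - PI) + PI) by ring.
  rewrite neg_cos, <- cos_Rabs.
  assert (Ht : Rabs (Rabs d - PI) <= PI / 3) by (apply Rabs_le; lra).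
  pose proof (Rabs_pos (Rabs d - PI)).
  assert (cos (PI / 3) <= cos (Rabs (Rabs d - PI))); [|rewrite cos_PI3 in *; lra].
  destruct (Req_dec (Rabs (Rabs d - PI)) (PI / 3)) as [->|]; [lra|].
  left; apply cos_decreasing_1; lra.
Qed.

Lemma cos_half_gt0 d : Rabs d < 4 * PI / 3 -> -1/2 < cos d -> 0 < cos (d / 2).
Proof.
  intros Hd Hc. pose proof PI_RGT_0.
  assert (Rabs d < 2 * PI / 3).
  { destruct (Rlt_or_le (Rabs d) (2 * PI / 3)) as [|Hle]; auto.
    pose proof (cos_le_neg_half d (conj Hle (Rlt_le _ _ Hd))); lra. }
  apply Rabs_def2 in H0. apply cos_gt_0; lra.
Qed.

Lemma wide_of_mid_gap a b a' b' :
  Rabs a < 2 * PI / 3 -> Rabs b < 2 * PI / 3 -> Rabs a' < 2 * PI / 3 -> Rabs b' < 2 * PI / 3 ->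
  PI <= Rabs ((a' + b') / 2 - (a + b) / 2) ->
  2 * PI / 3 <= Rabs (a' - a) <= 4 * PI / 3 /\ 2 * PI / 3 <= Rabs (b' - b) <= 4 * PI / 3.
Proof.
  intros Ha Hb Ha' Hb' Hm. pose proof PI_RGT_0.
  apply Rabs_def2 in Ha, Hb, Ha', Hb'.
  revert Hm; unfold Rabs; repeat destruct Rcase_abs; intros; lra.
Qed.

Definition mid_arg (x a b : pt) : R := (arg_rel x a + arg_rel x b) / 2.

Definition ell_gain (x a b : pt) : R :=
  2 * nrm a * nrm b * nrm x / (nrm a + nrm b) * cos ((arg_rel x a - arg_rel x b) / 2).

Lemma dot_ell_rot x a b c : x <> origin -> a <> origin -> b <> origin ->
  dot (ell a b) (rot x c) = ell_gain x a b * cos (mid_arg x a b - c).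
Proof.
  intros Hx Ha Hb. pose proof (nrm_gt0 a Ha); pose proof (nrm_gt0 b Hb).
  unfold ell, ell_gain, mid_arg. rewrite dot_padd, !dot_pscale, !dot_rot by auto.
  transitivity (nrm a * nrm b * nrm x / (nrm a + nrm b) *
                (cos (arg_rel x a - c) + cos (arg_rel x b - c))); [field; lra|].
  rewrite form1.
  replace ((arg_rel x a - c - (arg_rel x b - c)) / 2) with ((arg_rel x a - arg_rel x b) / 2) by field.
  replace ((arg_rel x a - c + (arg_rel x b - c)) / 2) with ((arg_rel x a + arg_rel x b) / 2 - c) by field.
  field; lra.
Qed.

Lemma dot_conv_comb (w : list R) (ps : list pt) (e : pt) :
  dot (fold_right padd origin (map (fun '(t, p) => pscale t p) (combine w ps))) e =
  fold_right Rplus 0 (map (fun '(t, p) => t * dot p e) (combine w ps)).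
Proof.
  revert ps; induction w as [|t w IH]; intros [|p ps]; simpl; try apply dot_origin.
  rewrite dot_padd, dot_pscale, IH; reflexivity.
Qed.

Lemma weighted_sum_pos (w : list R) (ps : list pt) (e : pt) :
  Forall (fun t => 0 <= t) w -> Forall (fun p => 0 < dot p e) ps ->
  length w = length ps ->
  0 <= fold_right Rplus 0 (map (fun '(t, p) => t * dot p e) (combine w ps)) /\
  (0 < fold_right Rplus 0 w ->
   0 < fold_right Rplus 0 (map (fun '(t, p) => t * dot p e) (combine w ps))).
Proof.
  revert ps; induction w as [|t w IH]; intros [|p ps] Hw Hps Hlen; simpl in *;
    try discriminate; [lra|].
  inversion Hw as [|? ? Ht Hw']; inversion Hps as [|? ? Hp Hps']; subst.
  destruct (IH ps Hw' Hps' ltac:(auto)) as [IH0 IH1].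
  assert (0 <= fold_right Rplus 0 w) by (clear - Hw'; induction Hw'; simpl; lra).
  split; [nra|intro Hs].
  destruct (Rle_lt_or_eq_dec 0 t Ht) as [|<-]; [nra|].
  specialize (IH1 ltac:(lra)); lra.
Qed.

Lemma not_in_conv_hull_of_halfplane (ps : list pt) (e : pt) :
  Forall (fun p => 0 < dot p e) ps -> ~ in_conv_hull origin ps.
Proof.
  intros Hps [w [Hlen [Hw [Hsum Hcomb]]]].
  apply (f_equal (fun v => dot v e)) in Hcomb.
  rewrite dot_conv_comb, dot_origin in Hcomb.
  destruct (weighted_sum_pos w ps e Hw Hps Hlen) as [_ Hpos]. lra.
Qed.

Lemma list_range (m0 : R) (ms : list R) : exists lo hi,
  In lo (m0 :: ms) /\ In hi (m0 :: ms) /\ forall m, In m (m0 :: ms) -> lo <= m <= hi.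
Proof.
  revert m0; induction ms as [|m1 ms IH]; intro m0.
  - exists m0, m0; split; [|split]; simpl; auto. intros m [<-|[]]; lra.
  - destruct (IH m1) as [lo [hi [Hlo [Hhi Hr]]]].
    exists (Rmin m0 lo), (Rmax m0 hi). unfold Rmin, Rmax.
    split; [|split]; [destruct Rle_dec; simpl; auto..|].
    intros m [<-|Hm]; [|specialize (Hr m Hm)]; repeat destruct Rle_dec; lra.
Qed.

(* The witness is the midrange of the angles. *)
Lemma common_cos_pos (ms : list R) :
  (forall m m', In m ms -> In m' ms -> Rabs (m - m') < PI) ->
  exists c, forall m, In m ms -> 0 < cos (m - c).
Proof.
  intro Hspread. destruct ms as [|m0 ms]; [exists 0; intros m []|].
  destruct (list_range m0 ms) as [lo [hi [Hlo [Hhi Hr]]]].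
  pose proof (Hspread hi lo Hhi Hlo). apply Rabs_def2 in H.
  exists ((lo + hi) / 2); intros m Hm. specialize (Hr m Hm). apply cos_gt_0; lra.
Qed.

Lemma in_endpoints M a b : In (a, b) M -> In a (endpoints M) /\ In b (endpoints M).
Proof.
  intro H; unfold endpoints; split; apply in_flat_map; exists (a, b); simpl; auto.
Qed.

Lemma endpoints_neq M a b : NoDup (endpoints M) -> In (a, b) M -> a <> b.
Proof.
  induction M as [|p M IH]; intros Hnd Hin; [destruct Hin|].
  simpl in Hnd. inversion Hnd as [|? ? Hn1 Hnd1]; inversion Hnd1; subst.
  destruct Hin as [->|Hin]; [simpl in Hn1; intros ->; tauto|auto].
Qed.

Lemma endpoints_NoDup_pair M a b a' b' : NoDup (endpoints M) ->
  In (a, b) M -> In (a', b') M -> (a, b) <> (a', b') -> NoDup (a :: b :: b' :: a' :: nil).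
Proof.
  induction M as [|p M IH]; intros Hnd Hin Hin' Hne; [destruct Hin|].
  simpl in Hnd. inversion Hnd as [|? ? Hn1 Hnd1]; inversion Hnd1 as [|? ? Hn2 Hnd2]; subst.
  destruct Hin as [E|Hin], Hin' as [E'|Hin']; [congruence| subst p | subst p |auto].
  - destruct (in_endpoints M a' b' Hin'); pose proof (endpoints_neq M a' b' Hnd2 Hin').
    simpl in *; repeat constructor; simpl; intuition congruence.
  - destruct (in_endpoints M a b Hin); pose proof (endpoints_neq M a b Hnd2 Hin).
    simpl in *; repeat constructor; simpl; intuition congruence.
Qed.

Lemma alternating_square lam M a b a' b' :
  In (a, b) M -> In (a', b') M -> NoDup (a :: b :: b' :: a' :: nil) ->
  nrm b + nrm b' < lam * nrm (psub b b') -> nrm a' + nrm a < lam * nrm (psub a' a) ->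
  alternating_cycle lam M (a :: b :: b' :: a' :: nil).
Proof.
  intros Hab Hab' Hnd Hr1 Hr2.
  destruct (in_endpoints M a b Hab), (in_endpoints M a' b' Hab').
  split; [exact Hnd|split].
  - intros v Hv; simpl in Hv; intuition congruence.
  - exists 2%nat; split; [lia|split; [reflexivity|]].
    intros i Hi; destruct i as [|[|[|[|i]]]]; [..|lia]; simpl.
    + exists a, b; auto.
    + repeat split; auto.
    + exists a', b'; auto.
    + repeat split; auto.
Qed.

Lemma blue_left_nonzero lam a b : 1 < lam -> a <> b ->
  nrm a + nrm b = lam * nrm (psub a b) -> a <> origin.
Proof.
  intros Hl Hab He ->. rewrite nrm_origin, nrm_psub_sym, nrm_psub_origin in He.
  pose proof (nrm_nonneg b). apply Hab; symmetry; apply nrm_eq0; nra.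
Qed.

Lemma obtuse_of_wide x v w : x <> origin -> v <> origin -> w <> origin ->
  2 * PI / 3 <= Rabs (arg_rel x w - arg_rel x v) <= 4 * PI / 3 ->
  dot v w <= - (nrm v * nrm w) / 2.
Proof.
  intros Hx Hv Hw Hwide. rewrite Rabs_minus_sym in Hwide.
  pose proof (cos_le_neg_half _ Hwide).
  rewrite (dot_arg_rel x v w) by auto.
  pose proof (nrm_gt0 v Hv); pose proof (nrm_gt0 w Hw).
  assert (0 < nrm v * nrm w) by nra. nra.
Qed.

Section Configuration.

Variables (lam : R) (M : list (pt * pt)) (x : pt).
Hypotheses (Hlam : 2 / sqrt 3 < lam) (Hnd : NoDup (endpoints M))
  (Hblue : forall a b, In (a, b) M -> nrm a + nrm b = lam * nrm (psub a b))
  (Hx : In x (endpoints M))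
  (Hnarrow : forall y, In y (endpoints M) -> y <> x -> angle x y < 2 * PI / 3).

Lemma endpoint_nonzero v : In v (endpoints M) -> v <> origin.
Proof.
  assert (Hl : 1 < lam) by (destruct (lam_facts lam Hlam); nra).
  unfold endpoints; rewrite in_flat_map; intros [[a b] [Hab Hv]].
  pose proof (endpoints_neq M a b Hnd Hab) as Hne.
  pose proof (Hblue a b Hab) as He.
  simpl in Hv; destruct Hv as [<-|[<-|[]]].
  - exact (blue_left_nonzero lam a b Hl Hne He).
  - apply (blue_left_nonzero lam b a Hl); [auto|]. rewrite nrm_psub_sym; lra.
Qed.

Let Hx0 : x <> origin := endpoint_nonzero x Hx.

Lemma arg_rel_narrow v : In v (endpoints M) -> Rabs (arg_rel x v) < 2 * PI / 3.
Proof.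
  intro Hv. rewrite Rabs_arg_rel. pose proof PI_RGT_0.
  destruct (classic (v = x)) as [->|Hne]; [rewrite angle_self by auto; lra|auto].
Qed.

Lemma red_of_wide v w : In v (endpoints M) -> In w (endpoints M) ->
  2 * PI / 3 <= Rabs (arg_rel x w - arg_rel x v) <= 4 * PI / 3 ->
  nrm v + nrm w < lam * nrm (psub v w).
Proof.
  intros Hv Hw Hwide. apply nrm_add_lt_of_obtuse; auto using endpoint_nonzero.
  apply (obtuse_of_wide x); auto using endpoint_nonzero.
Qed.

(* A blue pair cannot be at least [2 pi/3] apart, since it would then be red. *)
Lemma ell_gain_pos a b : In (a, b) M -> 0 < ell_gain x a b.
Proof.
  intro Hab. destruct (in_endpoints M a b Hab) as [Ha Hb].
  pose proof (endpoint_nonzero a Ha) as Ha0; pose proof (endpoint_nonzero b Hb) as Hb0.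
  pose proof (nrm_gt0 a Ha0); pose proof (nrm_gt0 b Hb0); pose proof (nrm_gt0 x Hx0).
  assert (Hc : -1/2 < cos (arg_rel x a - arg_rel x b)).
  { apply Rnot_le_lt; intro Hle.
    assert (Hobtuse : dot a b <= - (nrm a * nrm b) / 2).
    { rewrite (dot_arg_rel x a b) by auto. assert (0 < nrm a * nrm b) by nra. nra. }
    pose proof (nrm_add_lt_of_obtuse lam a b Hlam Ha0 Hobtuse). pose proof (Hblue a b Hab). lra. }
  pose proof (arg_rel_narrow a Ha) as Hta; pose proof (arg_rel_narrow b Hb) as Htb.
  apply Rabs_def2 in Hta, Htb.
  unfold ell_gain. apply Rmult_lt_0_compat.
  - unfold Rdiv. apply Rmult_lt_0_compat; [|apply Rinv_0_lt_compat; lra].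
    repeat apply Rmult_lt_0_compat; lra.
  - apply cos_half_gt0; auto. apply Rabs_def1; lra.
Qed.

(* Otherwise some direction [rot x c] would make an acute angle with every [ell a b]. *)
Lemma mid_arg_gap : in_conv_hull origin (map (fun p => ell (fst p) (snd p)) M) ->
  exists a b a' b', In (a, b) M /\ In (a', b') M /\
    PI <= Rabs (mid_arg x a' b' - mid_arg x a b).
Proof.
  intro Hhull. apply NNPP; intro Hno.
  destruct (common_cos_pos (map (fun p => mid_arg x (fst p) (snd p)) M)) as [c Hc].
  { intros m m' Hm Hm'. apply in_map_iff in Hm as [[a b] [<- Hab]].
    apply in_map_iff in Hm' as [[a' b'] [<- Hab']].
    apply Rnot_le_lt; intro Hgap. apply Hno; exists a', b', a, b; auto. }
  refine (not_in_conv_hull_of_halfplane _ (rot x c) _ Hhull).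
  apply Forall_forall; intros e He. apply in_map_iff in He as [[a b] [<- Hab]]; simpl.
  destruct (in_endpoints M a b Hab) as [Ha Hb].
  rewrite dot_ell_rot by auto using endpoint_nonzero.
  apply Rmult_lt_0_compat; [now apply ell_gain_pos|].
  apply (Hc (mid_arg x a b)), in_map_iff; exists (a, b); auto.
Qed.

End Configuration.

Theorem lemma2 (lam : R) (M : list (pt * pt)) :
  2 / sqrt 3 < lam ->
  (length M = 2%nat \/ length M = 3%nat) ->
  NoDup (endpoints M) ->
  (forall a b, In (a, b) M -> nrm a + nrm b = lam * nrm (psub a b)) ->
  in_conv_hull origin (map (fun p => ell (fst p) (snd p)) M) ->
  (exists x, In x (endpoints M) /\
     forall y, In y (endpoints M) -> y <> x -> angle x y < 2 * PI / 3) ->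
  exists c : list pt, alternating_cycle lam M c.
Proof.
  intros Hlam _ Hnd Hblue Hhull [x [Hx Hnarrow]].
  destruct (mid_arg_gap lam M x Hlam Hnd Hblue Hx Hnarrow Hhull)
    as (a & b & a' & b' & Hab & Hab' & Hgap).
  destruct (in_endpoints M a b Hab) as [Ha Hb], (in_endpoints M a' b' Hab') as [Ha' Hb'].
  pose proof (arg_rel_narrow lam M x Hlam Hnd Hblue Hx Hnarrow) as Hth.
  destruct (wide_of_mid_gap _ _ _ _ (Hth a Ha) (Hth b Hb) (Hth a' Ha') (Hth b' Hb') Hgap)
    as [Hwide_a Hwide_b].
  exists (a :: b :: b' :: a' :: nil). apply alternating_square; auto.
  - apply (endpoints_NoDup_pair M); auto. intro E; injection E as -> ->.
    rewrite Rminus_diag, Rabs_R0 in Hgap. pose proof PI_RGT_0; lra.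
  - apply (red_of_wide lam M x); auto.
  - apply (red_of_wide lam M x); auto. rewrite Rabs_minus_sym; auto.
Qed.
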